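(* Let $n\ge 4$, $N=\{1,\dots,n\}$, fix distinct $i_1,i_2\in N$ and let $\hat N^c=N\setminus\{i_1,i_2\}$. Then the inequality $$\sum_{j\in\hat N^c}\left(x_{i_1j}+x_{ji_1}+x_{ji_2}\right)-x_{i_1i_2}-\sum_{j,j'\in\hat N^c:\,j\ne j'} x_{jj'}\le 3-\frac{(n-4)(n-5)}{2}$$ defines a facet of the weak order polytope $P^n_{WO}$.
   Context: Let $N=\{1,\dots,n\}$ and $A_N=\{(i,j): i,j\in N, i\ne j\}$. A weak order on $N$ is a binary relation $W\subseteq N\times N$ that is reflexive, transitive and total; $(i,j)\in W$ is read ''$i$ is preferred over or tied with $j$''. The characteristic vector of $W$ is $x^W\in\{0,1\}^{A_N}$ with $x^W_{(i,j)}=1$ if $(i,j)\in W$ and $0$ otherwise. The weak order polytope $P^n_{WO}$ is the convex hull of the characteristic vectors of all weak orders on $N$; its points are vectors $x\in\mathbb{R}^{A_N}$ and $x_{ij}$ denotes the coordinate $x_{(i,j)}$. $P^n_{WO}$ has dimension $n(n-1)$. An inequality $\pi x\le\pi_0$ defines a facet of a polytope $P$ if it is valid for $P$ (holds for all $x\in P$) and the face $P\cap\{x:\pi x=\pi_0\}$ is nonempty, proper, and contains $\dim(P)$ affinely independent points. *)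

From mathcomp Require Import all_boot all_order all_algebra.
Set Implicit Arguments. Unset Strict Implicit. Unset Printing Implicit Defensive.
Import Order.TTheory GRing.Theory Num.Theory.
Local Open Scope ring_scope.

(* N = 'I_n (elements 0..n-1 play the role of 1..n). *)
Definition arc_pred (n : nat) : pred ('I_n * 'I_n)%type := fun p => p.1 != p.2.
Definition arc (n : nat) : finType := {p : 'I_n * 'I_n | @arc_pred n p}.

Definition point (R : realFieldType) (n : nat) := arc n -> R.

(* Coordinate x_{ij}; only meaningful (and only used) when i <> j. *)
Definition xc (R : realFieldType) (n : nat) (x : point R n) (i j : 'I_n) : R :=
  match insub (i, j) : option (arc n) with Some a => x a | None => 0 end.

Definition relN (n : nat) := {ffun 'I_n * 'I_n -> bool}.

Definition is_weak_order (n : nat) (W : relN n) : Prop :=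
  (forall i, W (i, i)) /\
  (forall i j k, W (i, j) -> W (j, k) -> W (i, k)) /\
  (forall i j, W (i, j) || W (j, i)).

Definition charvec (R : realFieldType) (n : nat) (W : relN n) : point R n :=
  fun a => if W (val a) then 1 else 0.

Definition WO_polytope (R : realFieldType) (n : nat) (x : point R n) : Prop :=
  exists lam : relN n -> R,
    (forall W, 0 <= lam W) /\
    (forall W, ~ is_weak_order W -> lam W = 0) /\
    \sum_(W : relN n) lam W = 1 /\
    (forall a, x a = \sum_(W : relN n) lam W * charvec R W a).

Definition aff_indep (R : realFieldType) (n k : nat) (v : 'I_k -> point R n) : Prop :=
  forall c : 'I_k -> R,
    \sum_(i < k) c i = 0 ->
    (forall a, \sum_(i < k) c i * v i a = 0) ->
    forall i, c i = 0.

Definition poly_dim (R : realFieldType) (n : nat) (P : point R n -> Prop) (d : nat) : Prop :=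
  (exists v : 'I_d.+1 -> point R n, (forall i, P (v i)) /\ aff_indep v) /\
  (forall v : 'I_d.+2 -> point R n, (forall i, P (v i)) -> ~ aff_indep v).

Definition is_facet (R : realFieldType) (n : nat) (P : point R n -> Prop)
    (f : point R n -> R) (f0 : R) : Prop :=
  (forall x, P x -> f x <= f0) /\
  (exists x, P x /\ f x = f0) /\
  (exists x, P x /\ f x < f0) /\
  (exists d, poly_dim P d /\
     exists v : 'I_d -> point R n, (forall i, P (v i) /\ f (v i) = f0) /\ aff_indep v).

From Pilot Require Import Defs.
From mathcomp Require Import all_boot all_order all_algebra.
From mathcomp Require Import ring lra zify.
Set Implicit Arguments. Unset Strict Implicit. Unset Printing Implicit Defensive.
Import Order.TTheory GRing.Theory Num.Theory.
Local Open Scope ring_scope.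

(* Write excess x := lhs x - rhs, regrouped so that at the vertex of a weak order W it is
   t - s - [i1 >= i2] - (number of tied pairs inside N^c), where t counts the elements of
   N^c tied with i1 and s those not >= i2.  If i1 >= i2, the t elements tied with i1 are
   pairwise tied and excess <= t - 1 - t(t-1)/2 <= 0; otherwise none of them is >= i2, so
   t <= s.
   For the facet property we use block-rank orders: i1, i2 and two elements j, j' of N^c
   get small ranks, every other element is ranked above them in a class of its own.  Their
   excess is an explicit function of the four ranks, which yields tight and slack vertices.
   Two such orders differ only on arcs inside the block, so an affine equation satisfied by
   all tight vertices gives linear relations between its coefficients, and these force it
   to be a multiple of the inequality.  In homogeneous coordinates this is a rank bound,
   hence n(n-1) affinely independent tight vertices; with the slack vertex the same
   argument shows that the polytope is full-dimensional. *)

Lemma row_free_rowsub (F : fieldType) m m' d (g : 'I_m' -> 'I_m) (A : 'M[F]_(m, d)) :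
  injective g -> row_free A -> row_free (rowsub g A).
Proof.
move=> g_inj freeA; apply: inj_row_free => u.
rewrite rowsubE mulmxA => /eqP; rewrite mulmx_free_eq0 // => /eqP uS0.
apply/rowP => l; have := congr1 (fun M : 'M_(1, m) => M 0 (g l)) uS0.
rewrite !mxE (bigD1 l) //= big1 => [|l' /negbTE nl]; last first.
  by rewrite !mxE (inj_eq g_inj) nl mulr0.
by rewrite !mxE eqxx mulr1 addr0.
Qed.

Lemma rank_ge_of_ker_sub (F : fieldType) m d k (M : 'M[F]_(m, d)) (Y : 'M_(k, d)) :
  (forall y : 'rV_d, M *m y^T = 0 -> (y <= Y)%MS) -> (d - \rank Y <= \rank M)%N.
Proof.
move=> kerY.
have /mxrankS : (kermx M^T <= Y)%MS.
  apply/row_subP => i; apply: kerY; apply: trmx_inj.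
  by rewrite trmx_mul trmxK trmx0 -row_mul mulmx_ker row0.
by rewrite mxrank_ker mxrank_tr; have := rank_leq_col M; lia.
Qed.

Section AffineIndependence.
Variables (R : realFieldType) (n : nat).
Local Notation arcs := (Defs.arc n).
Local Notation D := #|arcs|.

(* Coordinate [ord0] is the homogenizing one: the rows of [hom_mx v] are (1, v i), and
   [affine_form y] is x |-> y_0 + sum_a y_a x_a. *)
Definition affine_form (y : 'rV[R]_D.+1) (x : point R n) : R :=
  y 0 ord0 + \sum_(a : arcs) y 0 (lift ord0 (enum_rank a)) * x a.

Lemma affine_formZ l y x : affine_form (l *: y) x = l * affine_form y x.
Proof.
rewrite /affine_form !mxE mulrDr mulr_sumr; congr (_ + _).
by apply: eq_bigr => a _; rewrite mxE mulrA.
Qed.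

Definition hom_mx m (v : 'I_m -> point R n) : 'M[R]_(m, D.+1) :=
  \matrix_(i, k) if unlift ord0 k is Some t then v i (enum_val t) else 1.

Lemma sum_enum_val (F : 'I_D -> R) : \sum_t F t = \sum_(a : arcs) F (enum_rank a).
Proof. exact: (reindex _ (onW_bij _ (@enum_rank_bij _))). Qed.

Lemma hom_mx_mulT m (v : 'I_m -> point R n) y :
  hom_mx v *m y^T = \col_i affine_form y (v i).
Proof.
apply/colP => i; rewrite !mxE big_ord_recl !mxE unlift_none mul1r sum_enum_val.
by congr (_ + _); apply: eq_bigr => a _; rewrite !mxE liftK enum_rankK mulrC.
Qed.

Lemma mul_hom_mxE m (v : 'I_m -> point R n) (c : 'rV_m) k :
  (c *m hom_mx v) 0 k =
  if unlift ord0 k is Some t then \sum_i c 0 i * v i (enum_val t) else \sum_i c 0 i.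
Proof.
rewrite mxE; case: unliftP => [t|] -> ; apply: eq_bigr => i _; rewrite !mxE.
  by rewrite liftK.
by rewrite unlift_none mulr1.
Qed.

Lemma aff_indep_row_free m (v : 'I_m -> point R n) : aff_indep v <-> row_free (hom_mx v).
Proof.
split=> [indep | freeM c sum0 sumv0].
  apply: inj_row_free => c cM0; apply/rowP => i; rewrite mxE.
  apply: (indep (fun i => c 0 i)) => [|a].
    by have := congr1 (fun M : 'rV_D.+1 => M 0 ord0) cM0; rewrite mul_hom_mxE unlift_none mxE.
  have := congr1 (fun M : 'rV_D.+1 => M 0 (lift ord0 (enum_rank a))) cM0.
  by rewrite mul_hom_mxE liftK enum_rankK mxE.
have /eqP : \row_i c i *m hom_mx v = 0.
  apply/rowP => k; rewrite mul_hom_mxE mxE.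
  case: unliftP => [t|] _; [rewrite -[RHS](sumv0 (enum_val t)) | rewrite -[RHS]sum0];
    by apply: eq_bigr => i _; rewrite mxE.
rewrite (mulmx_free_eq0 _ freeM) => /eqP/rowP c0 i.
by have := c0 i; rewrite !mxE.
Qed.

Lemma aff_indep_card m (v : 'I_m -> point R n) : aff_indep v -> (m <= D.+1)%N.
Proof. by rewrite aff_indep_row_free -row_leq_rank => /leq_trans; apply; apply: rank_leq_col. Qed.

Lemma aff_indep_of_rank m (v : 'I_m -> point R n) k :
  (k <= \rank (hom_mx v))%N -> exists g : 'I_k -> 'I_m, aff_indep (fun i => v (g i)).
Proof.
move=> le_k; exists (fun i => maxrankfun (hom_mx v) (widen_ord le_k i)).
apply/aff_indep_row_free.
have -> : hom_mx (fun i => v (maxrankfun (hom_mx v) (widen_ord le_k i))) =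
          rowsub (widen_ord le_k) (rowsub (maxrankfun (hom_mx v)) (hom_mx v)).
  by apply/matrixP => i k'; rewrite !mxE.
apply/row_free_rowsub/maxrowsub_free => i i' /(congr1 val) eq_ii'.
exact: val_inj.
Qed.

Lemma exists_aff_indep (I : finType) (p : I -> point R n) k' (Y : 'M_(k', D.+1)) k :
  (k + \rank Y <= D.+1)%N ->
  (forall y, (forall i, affine_form y (p i) = 0) -> (y <= Y)%MS) ->
  exists g : 'I_k -> I, aff_indep (fun l => p (g l)).
Proof.
move=> le_k kerY; pose v (i : 'I_#|I|) := p (enum_val i).
have rankM : (D.+1 - \rank Y <= \rank (hom_mx v))%N.
  apply: rank_ge_of_ker_sub => y; rewrite hom_mx_mulT => /colP vy0.
  by apply: kerY => i; have := vy0 (enum_rank i); rewrite !mxE /v enum_rankK.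
have [|g indep] := @aff_indep_of_rank _ v k; first lia.
by exists (fun l => enum_val (g l)).
Qed.

End AffineIndependence.

Definition weak_orderb n (W : relN n) : bool :=
  [&& [forall i, W (i, i)],
      [forall i, forall j, forall k, W (i, j) ==> W (j, k) ==> W (i, k)] &
      [forall i, forall j, W (i, j) || W (j, i)]].

Lemma weak_orderP n (W : relN n) : reflect (is_weak_order W) (weak_orderb W).
Proof.
apply: (iffP and3P) => [[/forallP refl /forallP trans /forallP total]|[refl [trans total]]].
  split; [exact: refl | split=> [i j k Wij Wjk | i j]]; last by move/forallP: (total i).
  by move: (trans i) => /forallP/(_ j)/forallP/(_ k); rewrite Wij Wjk.
split; apply/forallP => i; first exact: refl.
  apply/forallP => j; apply/forallP => k; apply/implyP => Wij; apply/implyP.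
  exact: trans.
exact/forallP.
Qed.

Section PairForms.
Variables (R : realFieldType) (n : nat).
Local Notation arcs := (Defs.arc n).
Local Notation D := #|arcs|.

Lemma xc_diag (x : point R n) u : xc x u u = 0.
Proof. by rewrite /xc insubF //= /arc_pred /= eqxx. Qed.

Lemma xc_arc (x : point R n) (a : arcs) : xc x (val a).1 (val a).2 = x a.
Proof. by rewrite /xc -surjective_pairing valK. Qed.

Lemma xc_charvec (W : relN n) u v : u != v -> xc (charvec R W) u v = (W (u, v))%:R.
Proof. by move=> neq_uv; rewrite /xc insubT /charvec /=; case: (W (u, v)). Qed.

Lemma charvec_WO (W : relN n) : is_weak_order W -> WO_polytope (charvec R W).
Proof.
move=> wo_W; exists (fun W' => (W' == W)%:R); split; [|split; [|split]].
- by move=> W'; apply: ler0n.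
- by move=> W'; have [->|] := eqVneq W' W.
- by rewrite (bigD1 W) //= eqxx big1 ?addr0 // => W' /negbTE ->.
- move=> a; rewrite (bigD1 W) //= eqxx mul1r big1 ?addr0 // => W' /negbTE ->.
  by rewrite mul0r.
Qed.

Definition pair_form (cc : 'I_n -> 'I_n -> R) (x : point R n) : R :=
  \sum_u \sum_v cc u v * xc x u v.

Lemma eq_pair_form (cc cc' : 'I_n -> 'I_n -> R) x :
  (forall u v, u != v -> cc u v = cc' u v) -> pair_form cc x = pair_form cc' x.
Proof.
move=> eq_cc; apply: eq_bigr => u _; apply: eq_bigr => v _.
by have [->|/eq_cc ->] := eqVneq u v; rewrite ?xc_diag ?mulr0.
Qed.

Lemma pair_form_sum (I : finType) (lam : I -> R) (p : I -> point R n) cc x :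
  (forall a, x a = \sum_i lam i * p i a) ->
  pair_form cc x = \sum_i lam i * pair_form cc (p i).
Proof.
move=> xE; rewrite /pair_form.
under [RHS]eq_bigr => i _ do rewrite mulr_sumr.
rewrite [RHS]exchange_big; apply: eq_bigr => u _.
under [RHS]eq_bigr => i _ do rewrite mulr_sumr.
rewrite [RHS]exchange_big; apply: eq_bigr => v _.
rewrite /xc; case: insub => [a|]; last by rewrite mulr0 big1 // => i; rewrite !mulr0.
by rewrite xE mulr_sumr; apply: eq_bigr => i _; rewrite mulrCA.
Qed.

Lemma WO_polytope_pair_form_le cc c0 x :
  (forall W, is_weak_order W -> pair_form cc (charvec R W) <= c0) ->
  WO_polytope x -> pair_form cc x <= c0.
Proof.
move=> vertex_le [lam [lam_ge0 [lam_wo [lam_sum1 xE]]]].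
rewrite (pair_form_sum _ xE) -[c0]mul1r -lam_sum1 mulr_suml; apply: ler_sum => W _.
have [/weak_orderP/vertex_le|/weak_orderP/lam_wo ->] := boolP (weak_orderb W).
  exact: ler_wpM2l.
by rewrite !mul0r.
Qed.

Definition pair_coef (y : 'rV[R]_D.+1) (u v : 'I_n) : R :=
  if insub (u, v) : option arcs is Some a then y 0 (lift ord0 (enum_rank a)) else 0.

Lemma pair_coef_diag y u : pair_coef y u u = 0.
Proof. by rewrite /pair_coef insubF //= /arc_pred /= eqxx. Qed.

Lemma pair_coef_arc y (a : arcs) :
  pair_coef y (val a).1 (val a).2 = y 0 (lift ord0 (enum_rank a)).
Proof. by rewrite /pair_coef -surjective_pairing valK. Qed.

Lemma sum_arcs (F : 'I_n * 'I_n -> R) :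
  \sum_(a : arcs) F (val a) = \sum_(p | p.1 != p.2) F p.
Proof.
rewrite [RHS](reindex_omap (val : arcs -> _) insub) => [|p neq_p]; last by rewrite insubT.
by apply: eq_bigl => a; rewrite valK eqxx andbT; case: a.
Qed.

Lemma affine_formE y x : affine_form y x = y 0 ord0 + pair_form (pair_coef y) x.
Proof.
rewrite /affine_form /pair_form pair_big /=; congr (_ + _).
rewrite (bigID (fun p : 'I_n * 'I_n => p.1 != p.2)) /= [X in _ = _ + X]big1 ?addr0.
  rewrite -(sum_arcs (fun p => pair_coef y p.1 p.2 * xc x p.1 p.2)).
  by apply: eq_bigr => a _; rewrite pair_coef_arc xc_arc.
by case=> u v /negPn/eqP /= ->; rewrite xc_diag mulr0.
Qed.

Definition pair_row (cc : 'I_n -> 'I_n -> R) (c0 : R) : 'rV[R]_D.+1 :=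
  \row_k if unlift ord0 k is Some t then cc (val (enum_val t)).1 (val (enum_val t)).2 else c0.

Lemma pair_coef_row cc c0 u v : u != v -> pair_coef (pair_row cc c0) u v = cc u v.
Proof. by move=> neq_uv; rewrite /pair_coef insubT mxE liftK enum_rankK. Qed.

Lemma affine_form_pair_row cc c0 x : affine_form (pair_row cc c0) x = c0 + pair_form cc x.
Proof.
rewrite affine_formE mxE unlift_none; congr (_ + _).
by apply: eq_pair_form => u v /pair_coef_row.
Qed.

Lemma pair_row_coef y : pair_row (pair_coef y) (y 0 ord0) = y.
Proof.
apply/rowP => k; rewrite mxE; case: unliftP => [t|] ->; last by [].
by rewrite pair_coef_arc enum_valK.
Qed.

Lemma eq_pair_row (cc cc' : 'I_n -> 'I_n -> R) c0 :
  (forall u v, u != v -> cc u v = cc' u v) -> pair_row cc c0 = pair_row cc' c0.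
Proof.
move=> eq_cc; apply/rowP => k; rewrite !mxE; case: unliftP => [t|] _ //.
by apply: eq_cc; case: (enum_val t).
Qed.

Lemma scale_pair_row l cc c0 :
  l *: pair_row cc c0 = pair_row (fun u v => l * cc u v) (l * c0).
Proof. by apply/rowP => k; rewrite !mxE; case: unlift. Qed.

End PairForms.

Section RankOrders.
Variables (R : realFieldType) (n : nat).

Definition rank_order (r : 'I_n -> nat) : relN n := [ffun p => (r p.2 <= r p.1)%N].

Lemma rank_order_weak r : is_weak_order (rank_order r).
Proof.
split=> [i|]; first by rewrite ffunE.
split=> [i j k|i j]; rewrite !ffunE /=; last exact: leq_total.
by move=> le_ji le_kj; apply: leq_trans le_kj le_ji.
Qed.

Lemma pair_form_rank_order cc r : (forall u, cc u u = 0) ->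
  pair_form cc (charvec R (rank_order r)) = \sum_u \sum_v cc u v * (r v <= r u)%:R.
Proof.
move=> cc_diag; apply: eq_bigr => u _; apply: eq_bigr => v _.
have [->|neq_uv] := eqVneq u v; first by rewrite cc_diag !mul0r.
by rewrite xc_charvec // ffunE.
Qed.

Lemma pair_form_rank_order_sub cc (B : seq 'I_n) r r' :
  (forall u, cc u u = 0) -> uniq B ->
  (forall k l, k \notin B -> l \notin B -> (r l <= r k)%N = (r' l <= r' k)%N) ->
  (forall k l, k \in B -> l \notin B -> (r k < r l)%N && (r' k < r' l)%N) ->
  pair_form cc (charvec R (rank_order r)) - pair_form cc (charvec R (rank_order r')) =
  \sum_(u <- B) \sum_(v <- B) cc u v * ((r v <= r u)%:R - (r' v <= r' u)%:R).
Proof.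
move=> cc_diag uniqB same_out below.
pose d u v := cc u v * ((r v <= r u)%:R - (r' v <= r' u)%:R).
have d_out u v : ~~ ((u \in B) && (v \in B)) -> d u v = 0.
  rewrite /d; case: (boolP (u \in B)) => uB; case: (boolP (v \in B)) => vB //= _.
  - have /andP[lt_uv lt_uv'] := below _ _ uB vB.
    by rewrite (ltn_geF lt_uv) (ltn_geF lt_uv') subrr mulr0.
  - by have /andP[/ltnW-> /ltnW->] := below _ _ vB uB; rewrite subrr mulr0.
  - by rewrite same_out // subrr mulr0.
rewrite !pair_form_rank_order // -sumrB.
transitivity (\sum_u \sum_v d u v).
  by apply: eq_bigr => u _; rewrite -sumrB; apply: eq_bigr => v _; rewrite /d mulrBr.
rewrite (big_uniq _ uniqB) (bigID (mem B)) /= [X in _ + X]big1 ?addr0 => [|u uB]; last first.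
  by apply: big1 => v _; apply: d_out; rewrite (negbTE uB).
apply: eq_bigr => u uB; rewrite (big_uniq _ uniqB) (bigID (mem B)) /= [X in _ + X]big1 ?addr0 //.
by move=> v vB; apply: d_out; rewrite (negbTE vB) andbF.
Qed.

Definition block_rank (s1 s2 s3 s4 : 'I_n) (a1 a2 a3 a4 : nat) (k : 'I_n) : nat :=
  if k == s1 then a1 else if k == s2 then a2 else if k == s3 then a3
  else if k == s4 then a4 else ((a1 + a2 + a3 + a4).+1 + k)%N.

Lemma block_rank_out (s1 s2 s3 s4 : 'I_n) a1 a2 a3 a4 k :
  k \notin [:: s1; s2; s3; s4] ->
  block_rank s1 s2 s3 s4 a1 a2 a3 a4 k = ((a1 + a2 + a3 + a4).+1 + k)%N.
Proof. by rewrite !inE /block_rank; do 4!case: (_ == _). Qed.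

Lemma block_rank_in_lt_out (s1 s2 s3 s4 : 'I_n) a1 a2 a3 a4 k l :
  k \in [:: s1; s2; s3; s4] -> l \notin [:: s1; s2; s3; s4] ->
  (block_rank s1 s2 s3 s4 a1 a2 a3 a4 k < block_rank s1 s2 s3 s4 a1 a2 a3 a4 l)%N.
Proof.
move=> kB lB; rewrite (block_rank_out _ _ _ _ lB) addSn ltnS.
apply: leq_trans (leq_addr _ _); move: kB; rewrite !inE /block_rank.
by do 4?case: (_ == _) => //=; lia.
Qed.

Lemma block_rank_out_eq (s1 s2 s3 s4 : 'I_n) a1 a2 a3 a4 k l :
  k \notin [:: s1; s2; s3; s4] ->
  (block_rank s1 s2 s3 s4 a1 a2 a3 a4 k == block_rank s1 s2 s3 s4 a1 a2 a3 a4 l) = (k == l).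
Proof.
move=> kB; have [lB|lB] := boolP (l \in [:: s1; s2; s3; s4]).
  by rewrite gtn_eqF ?block_rank_in_lt_out //; apply/esym; apply: contraNF kB => /eqP->.
by rewrite !block_rank_out // eqn_add2l val_eqE.
Qed.

Section BlockRank.
Variables (s1 s2 s3 s4 : 'I_n) (a1 a2 a3 a4 : nat).
Hypothesis uniq_s : uniq [:: s1; s2; s3; s4].
Local Notation r := (block_rank s1 s2 s3 s4 a1 a2 a3 a4).

Let s_neq : [/\ [/\ s1 != s2, s1 != s3 & s1 != s4] & [/\ s2 != s3, s2 != s4 & s3 != s4]].
Proof. by move: uniq_s; rewrite /= !inE !negb_or => /and4P[/and3P[? ? ?] /andP[? ?] ? _]. Qed.

Lemma block_rank1 : r s1 = a1. Proof. by rewrite /block_rank eqxx. Qed.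

Lemma block_rank2 : r s2 = a2.
Proof. by have [[s12 _ _] _] := s_neq; rewrite /block_rank eq_sym (negbTE s12) eqxx. Qed.

Lemma block_rank3 : r s3 = a3.
Proof.
have [[_ s13 _] [s23 _ _]] := s_neq.
by rewrite /block_rank ![s3 == _]eq_sym (negbTE s13) (negbTE s23) eqxx.
Qed.

Lemma block_rank4 : r s4 = a4.
Proof.
have [[_ _ s14] [_ s24 s34]] := s_neq.
by rewrite /block_rank ![s4 == _]eq_sym (negbTE s14) (negbTE s24) (negbTE s34) eqxx.
Qed.

End BlockRank.

Lemma pair_form_block_rank_sub cc (s1 s2 s3 s4 : 'I_n) a1 a2 a3 a4 a1' a2' a3' a4' :
  (forall u, cc u u = 0) -> uniq [:: s1; s2; s3; s4] ->
  let r := block_rank s1 s2 s3 s4 a1 a2 a3 a4 in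
  let r' := block_rank s1 s2 s3 s4 a1' a2' a3' a4' in
  pair_form cc (charvec R (rank_order r)) - pair_form cc (charvec R (rank_order r')) =
  \sum_(u <- [:: s1; s2; s3; s4]) \sum_(v <- [:: s1; s2; s3; s4])
    cc u v * ((r v <= r u)%:R - (r' v <= r' u)%:R).
Proof.
move=> cc_diag uniq_s r r'; apply: pair_form_rank_order_sub => // k l kB lB.
  by rewrite /r /r' !block_rank_out // !leq_add2l.
by rewrite !block_rank_in_lt_out.
Qed.

End RankOrders.

Section Inequality.
Variables (R : realFieldType) (n : nat) (i1 i2 : 'I_n).
Hypotheses (n_ge4 : (4 <= n)%N) (i1_neq_i2 : i1 != i2).
Local Notation inC j := ((j != i1) && (j != i2)).
Local Notation inC2 j j' := [&& j' != i1, j' != i2 & j != j'].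
Local Notation D := #|Defs.arc n|.

Definition ineq_lhs (x : point R n) : R :=
  \sum_(j : 'I_n | inC j) (xc x i1 j + xc x j i1 + xc x j i2)
  - xc x i1 i2
  - \sum_(j : 'I_n | inC j) \sum_(j' : 'I_n | inC2 j j') xc x j j'.

Definition ineq_rhs : R := 3 - ((n - 4) * (n - 5))%:R / 2.

Definition ineq_coef (u v : 'I_n) : R :=
  ((u == i1) && inC v)%:R + (inC u && (v == i1))%:R + (inC u && (v == i2))%:R
  - ((u == i1) && (v == i2))%:R - (inC u && inC2 u v)%:R.

Lemma sum_pair_indicator (P : pred 'I_n) (Q : 'I_n -> pred 'I_n) (F : 'I_n -> 'I_n -> R) :
  \sum_u \sum_v (P u && Q u v)%:R * F u v = \sum_(u | P u) \sum_(v | Q u v) F u v.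
Proof.
rewrite [RHS]big_mkcond; apply: eq_bigr => u _; case: (P u) => /=.
  by rewrite [RHS]big_mkcond; apply: eq_bigr => v _; case: (Q u v); rewrite ?mul1r ?mul0r.
by rewrite big1 // => v _; rewrite mul0r.
Qed.

Lemma ineq_lhsE x : ineq_lhs x = pair_form ineq_coef x.
Proof.
rewrite /pair_form /ineq_coef.
under eq_bigr => u _ do under eq_bigr => v _ do rewrite !mulrBl !mulrDl.
under eq_bigr => u _ do rewrite ?(sumrB, big_split) /=.
rewrite ?(sumrB, big_split) /= !sum_pair_indicator !big_pred1_eq.
by rewrite /ineq_lhs !big_split; congr (_ + _ + _ - _ - _);
  apply: eq_bigr => u _; rewrite big_pred1_eq.
Qed.

Lemma card_inC : #|[pred j | inC j]| = (n - 2)%N.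
Proof.
have := cardC [set i1; i2]; rewrite cards2 i1_neq_i2 card_ord /=.
rewrite (@eq_card _ [predC [set i1; i2]] [pred j | inC j]) => [e|j].
  by rewrite -[in RHS]e addKn.
by rewrite !inE negb_or.
Qed.

Lemma card_inC2 j : inC j -> #|[pred j' | inC2 j j']| = (n - 3)%N.
Proof.
case/andP=> j_neq_i1 j_neq_i2.
have := cardC (j |: [set i1; i2]); rewrite cardsU1 cards2 !inE card_ord.
rewrite negb_or j_neq_i1 j_neq_i2 i1_neq_i2 /=.
rewrite (@eq_card _ [predC j |: [set i1; i2]] [pred j' | inC2 j j']) => [e|j'].
  by rewrite -[in RHS]e addKn.
by rewrite !inE !negb_or (eq_sym j) andbC andbA.
Qed.

Lemma sum_inC2_swap (F : 'I_n -> 'I_n -> R) :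
  \sum_(j | inC j) \sum_(j' | inC2 j j') F j' j =
  \sum_(j | inC j) \sum_(j' | inC2 j j') F j j'.
Proof.
rewrite (exchange_big_dep (fun j => inC j)) /= => [|j j' _ /and3P[-> ->]] //.
apply: eq_bigr => j /andP[j_neq_i1 j_neq_i2]; apply: eq_bigl => j'.
by rewrite j_neq_i1 j_neq_i2 [j' == j]eq_sym /= andbA.
Qed.

Definition excess (x : point R n) : R :=
  \sum_(j | inC j) (xc x i1 j + xc x j i1 - 1) + \sum_(j | inC j) (xc x j i2 - 1)
  - xc x i1 i2
  - 2^-1 * \sum_(j | inC j) \sum_(j' | inC2 j j') (xc x j j' + xc x j' j - 1).

Lemma ineq_lhs_subr_rhs x : ineq_lhs x - ineq_rhs = excess x.
Proof.
have rhsE : ineq_rhs = 2 * (n%:R - 2) - (n%:R - 2) * (n%:R - 3) / 2.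
  (* [n - 5] is truncated at n = 4. *)
  rewrite /ineq_rhs (_ : (n - 4) * (n - 5) = (n - 4) * (n - 4) - (n - 4))%N; last nia.
  by rewrite natrB ?natrM ?natrB; [field | lia | nia].
have sumC (F : 'I_n -> R) : \sum_(j | inC j) (F j - 1) = \sum_(j | inC j) F j - (n%:R - 2).
  by rewrite sumrB sumr_const card_inC natrB; last lia.
have sumC2 (F : 'I_n -> 'I_n -> R) :
    \sum_(j | inC j) \sum_(j' | inC2 j j') (F j j' + F j' j - 1) =
    2 * \sum_(j | inC j) \sum_(j' | inC2 j j') F j j' - (n%:R - 2) * (n%:R - 3).
  under eq_bigr => j inCj do rewrite sumrB sumr_const card_inC2 // big_split /=.
  rewrite sumrB big_split /= (sum_inC2_swap F) sumr_const card_inC -(mulr_natr (n - 3)%:R).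
  by rewrite !natrB; [ring | lia | lia].
by rewrite /excess !sumC sumC2 rhsE /ineq_lhs !big_split /=; field.
Qed.

Lemma tie_charvec (W : relN n) u v : is_weak_order W -> u != v ->
  xc (charvec R W) u v + xc (charvec R W) v u - 1 = (W (u, v) && W (v, u))%:R.
Proof.
case=> _ [_ total] neq_uv; rewrite !xc_charvec // 1?eq_sym //.
by have := total u v; case: (W (u, v)); case: (W (v, u)) => //= _; ring.
Qed.

Lemma ties_with_i1_le (W : relN n) : is_weak_order W ->
  (\sum_(j | inC j) (W (i1, j) && W (j, i1))%:R) *
    (\sum_(j | inC j) (W (i1, j) && W (j, i1))%:R - 1)
  <= \sum_(j | inC j) \sum_(j' | inC2 j j') (W (j, j') && W (j', j))%:R :> R.
Proof.
case=> _ [trans _]; set a := \sum_(j | inC j) _.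
have sum_other j : inC j ->
    \sum_(j' | inC2 j j') (W (i1, j') && W (j', i1))%:R = a - (W (i1, j) && W (j, i1))%:R :> R.
  move=> inCj; rewrite /a [in RHS](bigD1 j inCj) /= addrC addrK.
  by apply: eq_bigl => j'; rewrite [j == j']eq_sym andbA.
have -> : a * (a - 1) = \sum_(j | inC j) (W (i1, j) && W (j, i1))%:R *
      \sum_(j' | inC2 j j') (W (i1, j') && W (j', i1))%:R.
  rewrite {2}/a mulr_suml; apply: eq_bigr => j inCj; rewrite sum_other //.
  by case: (_ && _); rewrite /= ?mul1r ?mul0r.
apply: ler_sum => j _; rewrite mulr_sumr; apply: ler_sum => j' _.
case: (boolP (W (i1, j) && W (j, i1))) => [/andP[W1j Wj1]|_]; last by rewrite mul0r.
case: (boolP (W (i1, j') && W (j', i1))) => [/andP[W1j' Wj'1]|_]; last by rewrite mulr0.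
by rewrite (trans _ _ _ Wj1 W1j') (trans _ _ _ Wj'1 W1j) /= mulr1.
Qed.

Lemma natr_sub1_le_binom2 k : k%:R - 1 <= k%:R * (k%:R - 1) / 2 :> R.
Proof.
case: k => [|[|k]]; rewrite ?mulr0n ?mulr1n; try lra.
have : 2 <= k.+2%:R :> R by rewrite ler_nat.
move: k.+2%:R => z z_ge2; nra.
Qed.

Lemma excess_charvec (W : relN n) : is_weak_order W ->
  excess (charvec R W) =
  \sum_(j | inC j) (W (i1, j) && W (j, i1))%:R - \sum_(j | inC j) (~~ W (j, i2))%:R
  - (W (i1, i2))%:R - 2^-1 * \sum_(j | inC j) \sum_(j' | inC2 j j') (W (j, j') && W (j', j))%:R.
Proof.
move=> wo_W; rewrite /excess xc_charvec //; congr (_ + _ - _ - _ * _).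
- by apply: eq_bigr => j /andP[? ?]; rewrite tie_charvec // eq_sym.
- rewrite -sumrN; apply: eq_bigr => j /andP[? ?]; rewrite xc_charvec //.
  by case: (W _); rewrite /= ?subrr ?sub0r ?oppr0.
- by apply: eq_bigr => j _; apply: eq_bigr => j' /and3P[_ _ ?]; apply: tie_charvec.
Qed.

Lemma excess_charvec_le0 (W : relN n) : is_weak_order W -> excess (charvec R W) <= 0.
Proof.
move=> wo_W; have [_ [trans _]] := wo_W.
rewrite excess_charvec //; have := ties_with_i1_le wo_W.
set a := \sum_(j | inC j) _; set S := \sum_(j | inC j) _; set b := \sum_(j | inC j) _.
have S_ge0 : 0 <= S by do 2!apply: sumr_ge0 => ? _; apply: ler0n.
have b_ge0 : 0 <= b by apply: sumr_ge0 => ? _; apply: ler0n.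
case W12 : (W (i1, i2)) => /=.
  have [k ->] : exists k : nat, a = k%:R.
    by exists (\sum_(j | inC j) (W (i1, j) && W (j, i1)) : nat); rewrite natr_sum.
  by have := natr_sub1_le_binom2 k; lra.
have a_le_b : a <= b.
  apply: ler_sum => j _; case: (boolP (W (j, i2))) => [Wj2|_]; last by case: (_ && _).
  by case: (boolP (W (i1, j))) => // /trans/(_ Wj2); rewrite W12.
lra.
Qed.

Lemma ineq_valid x : WO_polytope x -> ineq_lhs x <= ineq_rhs.
Proof.
rewrite ineq_lhsE => /(WO_polytope_pair_form_le _); apply=> W wo_W.
by rewrite -ineq_lhsE -subr_le0 ineq_lhs_subr_rhs excess_charvec_le0.
Qed.

Lemma exists_inC : exists j, inC j.
Proof.
have : (0 < #|[pred j | inC j]|)%N by rewrite card_inC //; lia.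
by case/card_gt0P=> j; exists j.
Qed.

Lemma exists_inC2 j : inC j -> exists j', inC2 j j'.
Proof.
move=> inCj; have : (0 < #|[pred j' | inC2 j j']|)%N by rewrite card_inC2 //; lia.
by case/card_gt0P=> j'; exists j'.
Qed.

Lemma inC2_inC j j' : inC2 j j' -> inC j'.
Proof. by case/and3P=> -> ->. Qed.

Lemma inC2_sym j j' : inC j -> inC2 j j' -> inC2 j' j.
Proof. by case/andP=> -> -> /and3P[_ _]; rewrite eq_sym. Qed.

Lemma excess_rank_order r :
  excess (charvec R (rank_order r)) =
  \sum_(j | inC j) (r j == r i1)%:R - \sum_(j | inC j) (r j < r i2)%:R
  - (r i2 <= r i1)%:R - 2^-1 * \sum_(j | inC j) \sum_(j' | inC2 j j') (r j == r j')%:R.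
Proof.
rewrite excess_charvec //; last exact: rank_order_weak.
rewrite ffunE; congr (_ - _ - _ - _ * _).
- by apply: eq_bigr => j _; rewrite !ffunE /= -eqn_leq eq_sym.
- by apply: eq_bigr => j _; rewrite ffunE /= -ltnNge.
- by apply: eq_bigr => j _; apply: eq_bigr => j' _; rewrite !ffunE /= -eqn_leq eq_sym.
Qed.

Lemma sum_inC_two j j' (F : 'I_n -> R) : inC j -> inC2 j j' ->
  (forall k, inC k -> k != j -> k != j' -> F k = 0) ->
  \sum_(k | inC k) F k = F j + F j'.
Proof.
move=> inCj inC2jj' F0; have [_ _ neq_jj'] := and3P inC2jj'.
rewrite (bigD1 j inCj) (bigD1 j') /=; last by rewrite (inC2_inC inC2jj') eq_sym.
by rewrite big1 ?addr0 // => k /andP[/andP[inCk k_neq_j] k_neq_j']; apply: F0.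
Qed.

Lemma uniq_block j j' : inC j -> inC2 j j' -> uniq [:: i1; i2; j; j'].
Proof.
case/andP=> j_neq_i1 j_neq_i2 /and3P[j'_neq_i1 j'_neq_i2 neq_jj'].
rewrite /= !inE !negb_or ![i1 == _]eq_sym ![i2 == _]eq_sym.
by rewrite j_neq_i1 j_neq_i2 j'_neq_i1 j'_neq_i2 neq_jj' i1_neq_i2.
Qed.

Lemma excess_block_rank j j' a1 a2 b b' : inC j -> inC2 j j' ->
  excess (charvec R (rank_order (block_rank i1 i2 j j' a1 a2 b b'))) =
  (b == a1)%:R + (b' == a1)%:R - (b < a2)%:R - (b' < a2)%:R - (a2 <= a1)%:R - (b == b')%:R.
Proof.
move=> inCj inC2jj'; have inCj' := inC2_inC inC2jj'.
have uniq_s := uniq_block inCj inC2jj'.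
set B := [:: i1; i2; j; j'] in uniq_s *; set r := block_rank _ _ _ _ _ _ _ _.
have notB k : inC k -> k != j -> k != j' -> k \notin B.
  by case/andP=> ? ? ? ?; rewrite !inE !negb_or; apply/and4P.
rewrite excess_rank_order (@sum_inC_two j j') // => [|k inCk kj kj']; last first.
  by rewrite block_rank_out_eq ?notB //; case/andP: inCk => /negbTE->.
rewrite (@sum_inC_two j j') // => [|k inCk kj kj']; last first.
  by rewrite leq_gtF // ltnW // block_rank_in_lt_out ?notB // !inE eqxx orbT.
rewrite (@sum_inC_two j j') // => [|k inCk kj kj']; last first.
  by apply: big1 => l /and3P[_ _ neq_kl]; rewrite block_rank_out_eq ?notB // (negbTE neq_kl).
rewrite (bigD1 j') //= big1 => [|l /andP[/and3P[l_neq_i1 l_neq_i2 jl] lj']]; last first.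
  by rewrite eq_sym block_rank_out_eq ?notB ?l_neq_i1 // 1?eq_sym // (negbTE jl).
rewrite (bigD1 j (inC2_sym inCj inC2jj')) /= big1 => [|l /andP[/and3P[l_neq_i1 l_neq_i2 j'l] lj]].
  rewrite /r block_rank1 block_rank2 ?block_rank3 ?block_rank4 //.
  by rewrite ![_ == a1]eq_sym [b' == b]eq_sym; field.
by rewrite eq_sym block_rank_out_eq ?notB ?l_neq_i1 // eq_sym (negbTE j'l).
Qed.

Lemma i1_i2_or_inC u : [\/ u = i1, u = i2 | inC u].
Proof.
have [->|u_neq_i1] := eqVneq u i1; first by constructor 1.
have [->|u_neq_i2] := eqVneq u i2; first by constructor 2.
by constructor 3; apply/andP.
Qed.

Definition block_tight (a1 a2 b b' : nat) : bool :=
  ((b == a1) + (b' == a1) == (b < a2) + (b' < a2) + (a2 <= a1) + (b == b'))%N.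

Lemma block_rank_tight j j' a1 a2 b b' : inC j -> inC2 j j' -> block_tight a1 a2 b b' ->
  ineq_lhs (charvec R (rank_order (block_rank i1 i2 j j' a1 a2 b b'))) = ineq_rhs.
Proof.
move=> inCj inC2jj' /eqP tight; apply: subr0_eq.
rewrite ineq_lhs_subr_rhs excess_block_rank //.
by move/(congr1 (fun k : nat => k%:R : R)): tight; rewrite !natrD => ->; ring.
Qed.

Lemma exists_tight_order :
  exists W, is_weak_order W /\ ineq_lhs (charvec R W) = ineq_rhs.
Proof.
have [j inCj] := exists_inC; have [j' inC2jj'] := exists_inC2 inCj.
exists (rank_order (block_rank i1 i2 j j' 0 1 2 9)).
by split; [apply: rank_order_weak | apply: block_rank_tight].
Qed.

Lemma exists_slack_order :
  exists W, is_weak_order W /\ ineq_lhs (charvec R W) = ineq_rhs - 2.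
Proof.
have [j inCj] := exists_inC; have [j' inC2jj'] := exists_inC2 inCj.
exists (rank_order (block_rank i1 i2 j j' 0 5 1 2)); split; first exact: rank_order_weak.
apply: (addIr (- ineq_rhs)); rewrite ineq_lhs_subr_rhs excess_block_rank //=.
by rewrite ?mulr0n ?mulr1n; ring.
Qed.

Section TightEquations.
Variables (cc : 'I_n -> 'I_n -> R) (c0 : R).
Hypothesis cc_diag : forall u, cc u u = 0.
Hypothesis cc_tight : forall W, is_weak_order W ->
  ineq_lhs (charvec R W) = ineq_rhs -> pair_form cc (charvec R W) = c0.

(* Both orders agree outside the block, so only the arcs inside it survive. *)
Lemma tight_block_rank_relation j j' a1 a2 b b' a1' a2' b1 b1' :
  inC j -> inC2 j j' -> block_tight a1 a2 b b' -> block_tight a1' a2' b1 b1' ->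
  \sum_(k < 4) \sum_(l < 4) cc (nth i1 [:: i1; i2; j; j'] k) (nth i1 [:: i1; i2; j; j'] l) *
    ((nth 0%N [:: a1; a2; b; b'] l <= nth 0%N [:: a1; a2; b; b'] k)%:R
     - (nth 0%N [:: a1'; a2'; b1; b1'] l <= nth 0%N [:: a1'; a2'; b1; b1'] k)%:R) = 0.
Proof.
move=> inCj inC2jj' tight tight'; have uniq_s := uniq_block inCj inC2jj'.
have /= := pair_form_block_rank_sub a1 a2 b b' a1' a2' b1 b1' cc_diag uniq_s.
have tight_c0 p1 p2 p3 p4 : block_tight p1 p2 p3 p4 ->
    pair_form cc (charvec R (rank_order (block_rank i1 i2 j j' p1 p2 p3 p4))) = c0.
  by move=> ?; apply: cc_tight; [exact: rank_order_weak | exact: block_rank_tight].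
rewrite !tight_c0 // subrr => /esym.
rewrite !big_cons !big_nil !big_ord_recl !big_ord0 /=.
by rewrite !block_rank1 !block_rank2 ?block_rank3 ?block_rank4.
Qed.

(* Each pair of tight block ranks below differs in one or two comparisons only. *)
Lemma tight_coef_i2C j : inC j -> cc i2 j = 0.
Proof.
move=> inCj; have [j' inC2jj'] := exists_inC2 inCj.
have := @tight_block_rank_relation j j' 0 1 2 9 0 1 1 9 inCj inC2jj' isT isT.
by rewrite !big_ord_recl !big_ord0 /= ?mulr0n ?mulr1n; lra.
Qed.

Lemma tight_coef_i2i1 : cc i2 i1 = 0.
Proof.
have [j inCj] := exists_inC; have [j' inC2jj'] := exists_inC2 inCj.
have := @tight_block_rank_relation j j' 1 1 1 9 1 0 1 9 inCj inC2jj' isT isT.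
by rewrite !big_ord_recl !big_ord0 /= ?mulr0n ?mulr1n (tight_coef_i2C inCj); lra.
Qed.

Lemma tight_coef_Ci2 j : inC j -> cc j i2 = - cc i1 i2.
Proof.
move=> inCj; have [j' inC2jj'] := exists_inC2 inCj.
have := @tight_block_rank_relation j j' 0 1 0 9 0 0 0 9 inCj inC2jj' isT isT.
by rewrite !big_ord_recl !big_ord0 /= ?mulr0n ?mulr1n; lra.
Qed.

Lemma tight_coef_i1C j : inC j -> cc i1 j = - cc i1 i2.
Proof.
move=> inCj; have [j' inC2jj'] := exists_inC2 inCj.
have := @tight_block_rank_relation j j' 0 1 0 9 0 1 1 9 inCj inC2jj' isT isT.
by rewrite !big_ord_recl !big_ord0 /= ?mulr0n ?mulr1n (tight_coef_Ci2 inCj); lra.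
Qed.

Lemma tight_coef_CC j j' : inC j -> inC2 j j' -> cc j j' = cc i1 i2.
Proof.
move=> inCj inC2jj'.
have := @tight_block_rank_relation j j' 1 0 1 2 1 0 1 1 inCj inC2jj' isT isT.
by rewrite !big_ord_recl !big_ord0 /= ?mulr0n ?mulr1n (tight_coef_i1C (inC2_inC inC2jj')); lra.
Qed.

Lemma tight_coef_Ci1 j : inC j -> cc j i1 = - cc i1 i2.
Proof.
move=> inCj; have [j' inC2jj'] := exists_inC2 inCj.
have := @tight_block_rank_relation j' j 2 0 2 1 2 0 2 2 (inC2_inC inC2jj') (inC2_sym inCj inC2jj')
  isT isT.
by rewrite !big_ord_recl !big_ord0 /= ?mulr0n ?mulr1n (tight_coef_CC inCj inC2jj'); lra.
Qed.

Lemma tight_coefE u v : cc u v = - cc i1 i2 * ineq_coef u v.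
Proof.
have i2_neq_i1 : i2 != i1 by rewrite eq_sym.
rewrite /ineq_coef.
have [->|->|inCu] := i1_i2_or_inC u; have [->|->|inCv] := i1_i2_or_inC v;
  rewrite ?cc_diag ?eqxx ?(negbTE i1_neq_i2) ?(negbTE i2_neq_i1) /= ?mulr0n ?mulr1n;
  rewrite ?inCu ?inCv.
- lra.
- lra.
- by have /andP[_ /negbTE->] := inCv; rewrite (tight_coef_i1C inCv) /= ?mulr1n; lra.
- by rewrite tight_coef_i2i1; lra.
- lra.
- by rewrite (tight_coef_i2C inCv); lra.
- by rewrite andbF (tight_coef_Ci1 inCu) /= ?mulr0n ?mulr1n; lra.
- by have /andP[/negbTE-> _] := inCu; rewrite (tight_coef_Ci2 inCu) /= ?mulr0n ?mulr1n; lra.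
- have /andP[/negbTE u1 _] := inCu; have /andP[v1 v2] := inCv.
  rewrite u1 (negbTE v1) (negbTE v2) /=.
  have [<-|neq_uv] := eqVneq u v; first by rewrite cc_diag /= mulr0n; lra.
  have inC2uv : inC2 u v by rewrite v1 v2 neq_uv.
  by rewrite (tight_coef_CC inCu inC2uv) /= mulr1n; lra.
Qed.

Lemma tight_constE : c0 = - cc i1 i2 * ineq_rhs.
Proof.
have [W [wo_W W_tight]] := exists_tight_order.
rewrite -(cc_tight wo_W W_tight) -W_tight ineq_lhsE /pair_form mulr_sumr.
apply: eq_bigr => u _; rewrite mulr_sumr; apply: eq_bigr => v _.
by rewrite tight_coefE mulrA.
Qed.

End TightEquations.

Definition facet_row : 'rV[R]_D.+1 := pair_row ineq_coef (- ineq_rhs).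

Lemma affine_form_facet_row x : affine_form facet_row x = ineq_lhs x - ineq_rhs.
Proof. by rewrite affine_form_pair_row ineq_lhsE addrC. Qed.

Lemma tight_affine_form_sub (y : 'rV[R]_D.+1) :
  (forall W, is_weak_order W -> ineq_lhs (charvec R W) = ineq_rhs ->
     affine_form y (charvec R W) = 0) ->
  (y <= facet_row)%MS.
Proof.
move=> y_tight; apply/sub_rVP; exists (- pair_coef y i1 i2).
have y_pair W : is_weak_order W -> ineq_lhs (charvec R W) = ineq_rhs ->
    pair_form (pair_coef y) (charvec R W) = - y 0 ord0.
  by move=> wo_W W_tight; apply/eqP; rewrite -addr_eq0 addrC -affine_formE y_tight.
have c0E := tight_constE (pair_coef_diag y) y_pair.
rewrite -[LHS]pair_row_coef scale_pair_row mulrNN -[y 0 ord0]opprK c0E mulNr opprK.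
by apply: eq_pair_row => u v _; apply: (tight_coefE (pair_coef_diag y) y_pair).
Qed.

Lemma facet_aff_indep : exists v : 'I_D -> point R n,
  (forall l, WO_polytope (v l) /\ ineq_lhs (v l) = ineq_rhs) /\ aff_indep v.
Proof.
pose tight W := weak_orderb W && (ineq_lhs (charvec R W) == ineq_rhs).
pose p (W : {W : relN n | tight W}) := charvec R (val W).
have [|y y_tight|g indep] := @exists_aff_indep R n _ p 1 facet_row D.
- by rewrite -[X in (_ <= X)%N]addn1 leq_add2l rank_leq_row.
- apply: tight_affine_form_sub => W /weak_orderP wo_W /eqP W_tight.
  by apply: (y_tight (exist _ W _)); rewrite /tight wo_W W_tight.
exists (fun l => p (g l)); split=> // l; have /andP[/weak_orderP wo_W /eqP W_tight] := valP (g l).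
by split; [apply: charvec_WO|].
Qed.

End Inequality.

(* Any two distinct i1, i2 will do: their slack vertex excludes the nonzero multiples of
   [facet_row]. *)
Lemma weak_affine_form_eq0 (R : realFieldType) n (y : 'rV[R]_(#|Defs.arc n|).+1) :
  (4 <= n)%N -> (forall W, is_weak_order W -> affine_form y (charvec R W) = 0) -> y = 0.
Proof.
move=> n_ge4 y_weak; have n_gt1 : (1 < n)%N by lia.
pose i1 := Ordinal (ltnW n_gt1); pose i2 := Ordinal n_gt1.
have i1_neq_i2 : i1 != i2 by [].
have /sub_rVP[l y_def] : (y <= facet_row R i1 i2)%MS.
  by apply: tight_affine_form_sub => // W wo_W _; apply: y_weak.
have [W [wo_W W_slack]] := exists_slack_order R n_ge4 i1_neq_i2.
have := y_weak W wo_W; rewrite y_def affine_formZ affine_form_facet_row W_slack => yW0.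
by rewrite (_ : l = 0) ?scale0r //; lra.
Qed.

Lemma WO_polytope_dim (R : realFieldType) n :
  (4 <= n)%N -> poly_dim (@WO_polytope R n) #|Defs.arc n|.
Proof.
move=> n_ge4; split=> [|v _ /aff_indep_card]; last by rewrite ltnn.
pose p (W : {W : relN n | weak_orderb W}) := charvec R (val W).
have [|y y_weak|g indep] := @exists_aff_indep R n _ p 1 0 #|Defs.arc n|.+1.
- by rewrite mxrank0 addn0.
- rewrite (weak_affine_form_eq0 n_ge4 (y := y)) ?sub0mx // => W /weak_orderP wo_W.
  exact: (y_weak (exist _ W wo_W)).
exists (fun l => p (g l)); split=> // l; apply/charvec_WO/weak_orderP; exact: valP.
Qed.

Theorem mainTheorem11 (R : realFieldType) (n : nat) (i1 i2 : 'I_n) :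
  (4 <= n)%N -> i1 != i2 ->
  is_facet (@WO_polytope R n)
    (fun x : point R n =>
       \sum_(j : 'I_n | (j != i1) && (j != i2))
          (xc x i1 j + xc x j i1 + xc x j i2)
       - xc x i1 i2
       - \sum_(j : 'I_n | (j != i1) && (j != i2))
           \sum_(j' : 'I_n | [&& j' != i1, j' != i2 & j != j']) xc x j j')
    (3 - ((n - 4) * (n - 5))%:R / 2).
Proof.
move=> n_ge4 i1_neq_i2; change (is_facet (@WO_polytope R n) (ineq_lhs i1 i2) (ineq_rhs R n)).
have [W [wo_W W_tight]] := exists_tight_order R n_ge4 i1_neq_i2.
have [W' [wo_W' W'_slack]] := exists_slack_order R n_ge4 i1_neq_i2.
split; [by move=> x; apply: ineq_valid | split; [|split]].
- by exists (charvec R W); split; [apply: charvec_WO|].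
- by exists (charvec R W'); split; [apply: charvec_WO | rewrite W'_slack; lra].
- exists #|Defs.arc n|; split; [exact: WO_polytope_dim | exact: facet_aff_indep].
Qed.
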